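(* Let $(X,d,\preccurlyeq)$ be a preordered $s$-regular $b$-metric space and let $T,S,\tilde T,\tilde S:X\to X$. Suppose there are mappings $H_t,K_t:X\to X$, $0\le t\le n$, such that $$T=H_0\preccurlyeq H_1\succcurlyeq H_2\preccurlyeq\cdots\succcurlyeq H_n=\tilde T,\qquad S=K_0\succcurlyeq K_1\preccurlyeq K_2\succcurlyeq\cdots\preccurlyeq K_n=\tilde S.$$ Suppose $x_0\in\mathrm{Coin}(T,S)$ and: (i) for each odd $t$, $1\le t\le n$: $K_t$ is isotone, $H_t$ covers $K_t$, and every chain $C\in\mathcal{C}(x_0,K_t,H_t,\preccurlyeq)$ has a lower bound $w\in X$ satisfying $w\preccurlyeq K_t(w)$ for which there exists $z\in X$ with $H_t^i(z)\preccurlyeq H_t(w)\preccurlyeq K_t(w)$ for all $i\in\mathbb{N}$ and $d(K_t^i(w),H_t^i(z))\to 0$ as $i\to\infty$; (ii) for each even $t$, $1\le t\le n$: $H_t$ is isotone, $K_t$ covers $H_t$, and every chain $C'\in\mathcal{C}(x_0,H_t,K_t,\preccurlyeq)$ has a lower bound $w'\in X$ satisfying $w'\preccurlyeq H_t(w')$ for which there exists $z'\in X$ with $K_t^i(z')\preccurlyeq K_t(w')\preccurlyeq H_t(w')$ for all $i\in\mathbb{N}$ and $d(H_t^i(w'),K_t^i(z'))\to 0$ as $i\to\infty$. Then there exists a chain $x_0\succcurlyeq x_1\succcurlyeq x_2\succcurlyeq\cdots\succcurlyeq x_n$ such that for every $t$, $1\le t\le n$, $x_t\in\mathrm{Coin}(H_t,K_t)\cap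 O_X(x_{t-1})$ and $x_t$ is a minimal element of $\mathrm{Coin}(H_t,K_t)\cap O_X(x_{t-1})$.
   Context: A $b$-metric space with coefficient $s\ge 1$ is a nonempty set $X$ with $d:X\times X\to[0,\infty)$ such that for all $x,y,z$: $d(x,y)=0$ iff $x=y$; $d(x,y)=d(y,x)$; $d(x,y)\le s[d(x,z)+d(z,y)]$. A preorder is a reflexive transitive relation $\preccurlyeq$; $x\succcurlyeq y$ means $y\preccurlyeq x$; $x\prec y$ means $x\preccurlyeq y$ and $x\neq y$. A preordered $s$-regular $b$-metric space $(X,d,\preccurlyeq)$ is a $b$-metric space with coefficient $s$ with a preorder such that $x\preccurlyeq y\preccurlyeq z$ implies $\max\{d(x,y),d(y,z)\}\le s^2d(x,z)$. For maps $F,G:X\to X$, $F\preccurlyeq G$ means $F(x)\preccurlyeq G(x)$ for all $x\in X$. A chain is a subset any two elements of which are comparable. A map $T$ is isotone if $x\preccurlyeq y$ implies $T(x)\preccurlyeq T(y)$; $T^i$ is the $i$-th iterate. $O_X(x_0)=\{x: x\preccurlyeq x_0\}$; $\mathrm{Coin}(T,S)=\{x: T(x)=S(x)\}$. A map $S$ covers a map $T$ if for every $x\in X$ with $T(x)\preccurlyeq S(x)$ there exists $y\preccurlyeq x$ with $S(y)=T(x)$. For maps $T,S$ (here the first argument is the map playing the role of $T$), $\mathcal{C}(T,S,\preccurlyeq)$ is the set of chains $C$ such that for all $x,y\in C$: $T(x)\preccurlyeq S(x)$; $x\prec y$ implies $S(x)\preccurlyeq T(y)$; and $S(C)\subset T(X)$;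 and $\mathcal{C}(x_0,T,S,\preccurlyeq)=\{C\in\mathcal{C}(T,S,\preccurlyeq): C\subset O_X(x_0),\ S(C)\subset T(O_X(x_0))\}$. A lower bound of $C$ is $w$ with $w\preccurlyeq x$ for all $x\in C$. A minimal element of $A$ is $w\in A$ with no $u\in A$ such that $u\prec w$. *)

From Stdlib Require Export Reals Arith.
Open Scope R_scope.

Section Defs.
Context {X : Type}.

Definition is_bmetric (d : X -> X -> R) (s : R) : Prop :=
  1 <= s /\
  (forall x y, 0 <= d x y) /\
  (forall x y, d x y = 0 <-> x = y) /\
  (forall x y, d x y = d y x) /\
  (forall x y z, d x y <= s * (d x z + d z y)).

Definition is_preorder (le : X -> X -> Prop) : Prop :=
  (forall x, le x x) /\ (forall x y z, le x y -> le y z -> le x z).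

Definition preordered_s_regular_bmetric (d : X -> X -> R) (s : R)
  (le : X -> X -> Prop) : Prop :=
  is_bmetric d s /\ is_preorder le /\
  (forall x y z, le x y -> le y z -> Rmax (d x y) (d y z) <= s ^ 2 * d x z).

Definition strict (le : X -> X -> Prop) (x y : X) : Prop := le x y /\ x <> y.

Definition map_le (le : X -> X -> Prop) (F G : X -> X) : Prop :=
  forall x, le (F x) (G x).

Definition is_chain (le : X -> X -> Prop) (C : X -> Prop) : Prop :=
  forall x y, C x -> C y -> le x y \/ le y x.

Definition isotone (le : X -> X -> Prop) (T : X -> X) : Prop :=
  forall x y, le x y -> le (T x) (T y).

Definition OX (le : X -> X -> Prop) (x0 : X) : X -> Prop := fun x => le x x0.

Definition Coin (T S : X -> X) : X -> Prop := fun x => T x = S x.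

Definition covers (le : X -> X -> Prop) (S T : X -> X) : Prop :=
  forall x, le (T x) (S x) -> exists y, le y x /\ S y = T x.

Definition chainsC (le : X -> X -> Prop) (T S : X -> X) (C : X -> Prop) : Prop :=
  is_chain le C /\
  (forall x, C x -> le (T x) (S x)) /\
  (forall x y, C x -> C y -> strict le x y -> le (S x) (T y)) /\
  (forall x, C x -> exists u, S x = T u).

Definition chainsC0 (le : X -> X -> Prop) (x0 : X) (T S : X -> X)
  (C : X -> Prop) : Prop :=
  chainsC le T S C /\
  (forall x, C x -> OX le x0 x) /\
  (forall x, C x -> exists u, OX le x0 u /\ S x = T u).

Definition lower_bound (le : X -> X -> Prop) (C : X -> Prop) (w : X) : Prop :=
  forall x, C x -> le w x.

Definition minimal_in (le : X -> X -> Prop) (A : X -> Prop) (w : X) : Prop :=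
  A w /\ ~ (exists u, A u /\ strict le u w).

End Defs.

(** The preorder of an s-regular b-metric space is antisymmetric, since
    [x ≼ y ≼ x] forces [d x y <= s^2 d x x = 0].  Fix a step [t] and write
    [A], [B] for the isotone map and the covering map of (i) or (ii).  Every
    chain in [Coin(A,B) ∩ O(x_{t-1})] lies in [C(x_0,A,B)], and the lower
    bound [w] provided for it is again a coincidence point: from
    [B^i z ≼ B w ≼ A w ≼ A^i w] regularity gives
    [d(B w, A w) <= s^4 d(A^i w, B^i z) -> 0].  As [x_{t-1}] is a coincidence
    point of [H_{t-1}, K_{t-1}], the alternating inequalities between
    consecutive [H]'s and [K]'s give [A x_{t-1} ≼ B x_{t-1}], so
    covering makes the set nonempty, and Zorn's lemma for the reversed order
    yields a minimal element [x_t]. *)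

From Stdlib Require Import Reals Arith Lia Lra.
From mathcomp Require classical_sets boolp.
Open Scope R_scope.

Lemma finite_dependent_choice {A : Type} (Inv : nat -> A -> Prop)
    (Rel : nat -> A -> A -> Prop) (n : nat) (a0 : A) :
  Inv 0%nat a0 ->
  (forall t a, (t < n)%nat -> Inv t a -> exists b, Rel t a b /\ Inv (S t) b) ->
  exists x : nat -> A, x 0%nat = a0 /\
    forall t, (t < n)%nat -> Rel t (x t) (x (S t)).
Proof.
  intros Hinv0 Hstep.
  assert (Hupto : forall m, (m <= n)%nat -> exists x : nat -> A,
    x 0%nat = a0 /\ (forall t, (t < m)%nat -> Rel t (x t) (x (S t))) /\ Inv m (x m)).
  { induction m as [|m IH]; intros Hm.
    - exists (fun _ => a0). repeat split; [lia | exact Hinv0].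
    - destruct (IH ltac:(lia)) as (x & Hx0 & Hx & Hinv).
      destruct (Hstep m (x m) ltac:(lia) Hinv) as (b & Hb & Hbinv).
      exists (fun t => if Nat.eqb t (S m) then b else x t). cbn beta.
      rewrite Nat.eqb_refl. repeat split; [exact Hx0 | | exact Hbinv].
      intros t Ht.
      rewrite (proj2 (Nat.eqb_neq t (S m))) by lia.
      destruct (Nat.eq_dec t m) as [-> | Hne].
      + rewrite Nat.eqb_refl. exact Hb.
      + rewrite (proj2 (Nat.eqb_neq (S t) (S m))) by lia. apply Hx. lia. }
  destruct (Hupto n (Nat.le_refl n)) as (x & Hx0 & Hx & _).
  exists x. split; assumption.
Qed.

Lemma bounded_by_null_seq_nonpos (a c : R) (u : nat -> R) :
  (forall i, a <= c * u (S i)) -> Un_cv u 0 -> a <= 0.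
Proof.
  intros Hbound Hu.
  assert (Hconst : forall r, Un_cv (fun _ => r) r).
  { intros r eps Heps. exists 0%nat. intros i _.
    unfold R_dist. rewrite Rminus_diag, Rabs_R0. exact Heps. }
  assert (Hcu : Un_cv (fun i => c * u (i + 1)%nat) 0).
  { rewrite <- (Rmult_0_r c). exact (CV_mult _ _ _ _ (Hconst c) (CV_shift' u 1 0 Hu)). }
  refine (Rle_cv_lim _ (Hconst a) Hcu).
  intro i. rewrite Nat.add_1_r. apply Hbound.
Qed.

Section Preorder.
Context {X : Type} (le : X -> X -> Prop).

Lemma Coin_sym (T S : X -> X) (x : X) : Coin T S x <-> Coin S T x.
Proof. unfold Coin. split; intros; symmetry; assumption. Qed.

Lemma minimal_in_ext (P Q : X -> Prop) (m : X) :
  (forall x, P x <-> Q x) -> minimal_in le P m -> minimal_in le Q m.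
Proof.
  intros HPQ [Hm Hnot]. split; [apply HPQ; exact Hm |].
  intros (u & Hu & Hlt). apply Hnot. exists u. split; [apply HPQ |]; assumption.
Qed.

Lemma zorn_minimal (P : X -> Prop) :
  is_preorder le -> (forall x y, le x y -> le y x -> x = y) ->
  (exists p, P p) ->
  (forall C, (forall x, C x -> P x) -> is_chain le C -> (exists c, C c) ->
     exists w, P w /\ lower_bound le C w) ->
  exists m, minimal_in le P m.
Proof.
  intros [Hrefl Htrans] Hanti [p Hp] Hchain.
  set (ge_in := fun a b : {x | P x} => boolp.asbool (le (proj1_sig b) (proj1_sig a))).
  destruct (@classical_sets.Zorn _ ge_in) as [[m Hm] Hmax].
  - intros [a Ha]. apply boolp.asboolT, Hrefl.
  - intros [a Ha] [b Hb] [c Hc] Hab%boolp.asboolW Hbc%boolp.asboolW.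
    apply boolp.asboolT. exact (Htrans _ _ _ Hbc Hab).
  - intros [a Ha] [b Hb] Hab%boolp.asboolW Hba%boolp.asboolW. simpl in *.
    destruct (Hanti a b Hba Hab). f_equal. apply boolp.Prop_irrelevance.
  - intros F Htot.
    destruct (boolp.pselect (exists a, F a)) as [[[c Hc] HFc] | Hempty].
    + set (C := fun x => exists h : P x, F (exist P x h)).
      destruct (Hchain C) as (w & Hw & Hlb).
      * intros x [h _]. exact h.
      * intros x y [hx Fx] [hy Fy].
        destruct (Htot _ _ Fx Fy) as [H | H]; apply boolp.asboolW in H; auto.
      * exists c, Hc. exact HFc.
      * exists (exist P w Hw). intros [a Ha] HFa.
        apply boolp.asboolT, Hlb. exists Ha. exact HFa.
    + exists (exist P p Hp). intros a HFa. exfalso. apply Hempty. exists a. exact HFa.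
  - exists m. split; [exact Hm |]. intros (u & Hu & Hum & Hne).
    apply Hne.
    exact (f_equal (@proj1_sig _ _) (Hmax (exist P u Hu) (boolp.asboolT Hum))).
Qed.

Hypothesis Hpre : is_preorder le.

Let le_refl : forall x, le x x := proj1 Hpre.
Let le_trans : forall x y z, le x y -> le y z -> le x z := proj2 Hpre.

Lemma iter_isotone_above (A : X -> X) (w : X) :
  isotone le A -> le w (A w) -> forall i, le (A w) (Nat.iter (S i) A w).
Proof.
  intros HA Hw.
  assert (Hstep : forall i, le (Nat.iter i A w) (Nat.iter (S i) A w)).
  { induction i as [|i IH]; [exact Hw | exact (HA _ _ IH)]. }
  induction i as [|i IH]; [apply le_refl | exact (le_trans _ _ _ IH (Hstep _))].
Qed.

Lemma le_at_coin (A A0 B B0 : X -> X) (p : X) :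
  map_le le A A0 -> map_le le B0 B -> A0 p = B0 p -> le (A p) (B p).
Proof.
  intros HA HB Hp. apply (le_trans _ _ _ (HA p)). rewrite Hp. apply HB.
Qed.

Lemma singleton_chainsC0 (x0 p y : X) (A B : X -> X) :
  le p x0 -> le y p -> isotone le A -> B y = A p ->
  chainsC0 le x0 A B (fun x => x = y).
Proof.
  intros Hp Hy HA HBy.
  repeat split.
  - intros a b -> ->. left. apply le_refl.
  - intros a ->. rewrite HBy. apply HA, Hy.
  - intros a b -> -> [_ Hne]. contradiction Hne. reflexivity.
  - intros a ->. exists p. exact HBy.
  - intros a ->. exact (le_trans _ _ _ Hy Hp).
  - intros a ->. exists p. split; assumption.
Qed.

Lemma coin_chain_chainsC0 (x0 p : X) (A B : X -> X) (C : X -> Prop) :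
  le p x0 -> isotone le A -> is_chain le C ->
  (forall x, C x -> Coin B A x /\ OX le p x) ->
  chainsC0 le x0 A B C.
Proof.
  intros Hp HA Hchain HC. unfold Coin, OX in HC.
  repeat split; try exact Hchain.
  - intros x Cx. rewrite (proj1 (HC x Cx)). apply le_refl.
  - intros x y Cx Cy [Hxy _]. rewrite (proj1 (HC x Cx)). exact (HA _ _ Hxy).
  - intros x Cx. exists x. exact (proj1 (HC x Cx)).
  - intros x Cx. exact (le_trans _ _ _ (proj2 (HC x Cx)) Hp).
  - intros x Cx. exists x. split; [exact (le_trans _ _ _ (proj2 (HC x Cx)) Hp) |].
    exact (proj1 (HC x Cx)).
Qed.

End Preorder.

Section RegularBMetric.
Context {X : Type} (d : X -> X -> R) (s : R) (le : X -> X -> Prop).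
Hypothesis Hsp : preordered_s_regular_bmetric d s le.

Let Hpre : is_preorder le := proj1 (proj2 Hsp).
Let le_trans : forall x y z, le x y -> le y z -> le x z := proj2 Hpre.

Lemma bdist_ge0 x y : 0 <= d x y.
Proof. apply Hsp. Qed.

Lemma bdist_eq0 x y : d x y = 0 <-> x = y.
Proof. apply Hsp. Qed.

Lemma bdist_sym x y : d x y = d y x.
Proof. apply Hsp. Qed.

Lemma regular_dist_left x y z : le x y -> le y z -> d x y <= s ^ 2 * d x z.
Proof.
  intros Hxy Hyz. eapply Rle_trans; [apply Rmax_l |].
  exact (proj2 (proj2 Hsp) x y z Hxy Hyz).
Qed.

Lemma regular_dist_right x y z : le x y -> le y z -> d y z <= s ^ 2 * d x z.
Proof.
  intros Hxy Hyz. eapply Rle_trans; [apply Rmax_r |].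
  exact (proj2 (proj2 Hsp) x y z Hxy Hyz).
Qed.

Lemma regular_antisym x y : le x y -> le y x -> x = y.
Proof.
  intros Hxy Hyx. apply bdist_eq0.
  pose proof (regular_dist_left x y x Hxy Hyx) as Hd.
  rewrite (proj2 (bdist_eq0 x x) eq_refl), Rmult_0_r in Hd.
  pose proof (bdist_ge0 x y). lra.
Qed.

Lemma coin_of_squeezed_orbits (A B : X -> X) (w z : X) :
  isotone le A -> le w (A w) -> le (B w) (A w) ->
  (forall i, (1 <= i)%nat -> le (Nat.iter i B z) (B w)) ->
  Un_cv (fun i => d (Nat.iter i A w) (Nat.iter i B z)) 0 ->
  Coin B A w.
Proof.
  intros HA Hw HBA Hz Hcv.
  assert (Hs2 : 0 <= s ^ 2) by (apply pow2_ge_0).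
  assert (Hsqueeze : forall i, d (B w) (A w) <=
            s ^ 2 * s ^ 2 * d (Nat.iter (S i) A w) (Nat.iter (S i) B z)).
  { intro i.
    set (a := Nat.iter (S i) B z). set (e := Nat.iter (S i) A w).
    assert (Ha : le a (B w)) by (apply Hz; lia).
    assert (He : le (A w) e) by (apply (iter_isotone_above le Hpre); assumption).
    pose proof (regular_dist_right a (B w) (A w) Ha HBA) as H1.
    pose proof (regular_dist_left a (A w) e (le_trans _ _ _ Ha HBA) He) as H2.
    rewrite (bdist_sym e a), Rmult_assoc.
    apply (Rle_trans _ _ _ H1), Rmult_le_compat_l; assumption. }
  unfold Coin. apply bdist_eq0.
  pose proof (bounded_by_null_seq_nonpos _ _ _ Hsqueeze Hcv).
  pose proof (bdist_ge0 (B w) (A w)). lra.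
Qed.

Definition chains_orbit_bounded (x0 : X) (A B : X -> X) : Prop :=
  forall C : X -> Prop, chainsC0 le x0 A B C ->
    exists w : X, lower_bound le C w /\ le w (A w) /\
      exists z : X,
        (forall i : nat, (1 <= i)%nat ->
           le (Nat.iter i B z) (B w) /\ le (B w) (A w)) /\
        Un_cv (fun i => d (Nat.iter i A w) (Nat.iter i B z)) 0.

Lemma chains_coin_lower_bound (x0 : X) (A B : X -> X) (C : X -> Prop) :
  isotone le A -> chains_orbit_bounded x0 A B -> chainsC0 le x0 A B C ->
  exists w, lower_bound le C w /\ Coin B A w.
Proof.
  intros HA Hbounded HC.
  destruct (Hbounded C HC) as (w & Hlb & Hw & z & Hz & Hcv).
  exists w. split; [exact Hlb |].
  apply (coin_of_squeezed_orbits A B w z HA Hw); [apply (Hz 1%nat); lia | | exact Hcv].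
  intros i Hi. apply (Hz i Hi).
Qed.

Lemma exists_minimal_coin (x0 p : X) (A B : X -> X) :
  le p x0 -> le (A p) (B p) -> isotone le A -> covers le B A ->
  chains_orbit_bounded x0 A B ->
  exists q, minimal_in le (fun y => Coin B A y /\ OX le p y) q.
Proof.
  intros Hp HApBp HA Hcov Hbounded.
  apply zorn_minimal; [exact Hpre | exact regular_antisym | |].
  - destruct (Hcov p HApBp) as (y & Hyp & HBy).
    destruct (chains_coin_lower_bound x0 A B (fun x => x = y) HA Hbounded
                (singleton_chainsC0 le Hpre x0 p y A B Hp Hyp HA HBy)) as (w & Hlb & Hw).
    exists w. split; [exact Hw |]. exact (le_trans _ _ _ (Hlb y eq_refl) Hyp).
  - intros C HC Hchain [c Hc].
    destruct (chains_coin_lower_bound x0 A B C HA Hbounded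
                (coin_chain_chainsC0 le Hpre x0 p A B C Hp HA Hchain HC)) as (w & Hlb & Hw).
    exists w. split; [split; [exact Hw |] | exact Hlb].
    exact (le_trans _ _ _ (Hlb c Hc) (proj2 (HC c Hc))).
Qed.

End RegularBMetric.

Theorem theorem2p3 (X : Type) (d : X -> X -> R) (s : R) (le : X -> X -> Prop)
  (T S Tt St : X -> X) (n : nat) (H K : nat -> X -> X) (x0 : X) :
  preordered_s_regular_bmetric d s le ->
  H 0%nat = T -> K 0%nat = S -> H n = Tt -> K n = St ->
  (* T = H_0 ≼ H_1 ≽ H_2 ≼ ... ;  S = K_0 ≽ K_1 ≼ K_2 ≽ ... *)
  (forall t : nat, (t < n)%nat ->
     if Nat.even t then map_le le (H t) (H (t + 1)%nat) /\ map_le le (K (t + 1)%nat) (K t)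
     else map_le le (H (t + 1)%nat) (H t) /\ map_le le (K t) (K (t + 1)%nat)) ->
  Coin T S x0 ->
  (* (i) odd t *)
  (forall t : nat, (1 <= t <= n)%nat -> Nat.odd t = true ->
     isotone le (K t) /\ covers le (H t) (K t) /\
     (forall C : X -> Prop, chainsC0 le x0 (K t) (H t) C ->
        exists w : X, lower_bound le C w /\ le w (K t w) /\
          exists z : X,
            (forall i : nat, (1 <= i)%nat ->
               le (Nat.iter i (H t) z) (H t w) /\ le (H t w) (K t w)) /\
            Un_cv (fun i => d (Nat.iter i (K t) w) (Nat.iter i (H t) z)) 0)) ->
  (* (ii) even t *)
  (forall t : nat, (1 <= t <= n)%nat -> Nat.even t = true ->
     isotone le (H t) /\ covers le (K t) (H t) /\
     (forall C : X -> Prop, chainsC0 le x0 (H t) (K t) C ->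
        exists w : X, lower_bound le C w /\ le w (H t w) /\
          exists z : X,
            (forall i : nat, (1 <= i)%nat ->
               le (Nat.iter i (K t) z) (K t w) /\ le (K t w) (H t w)) /\
            Un_cv (fun i => d (Nat.iter i (H t) w) (Nat.iter i (K t) z)) 0)) ->
  exists x : nat -> X,
    x 0%nat = x0 /\
    forall t : nat, (1 <= t <= n)%nat ->
      le (x t) (x (t - 1)%nat) /\
      Coin (H t) (K t) (x t) /\ OX le (x (t - 1)%nat) (x t) /\
      minimal_in le (fun y => Coin (H t) (K t) y /\ OX le (x (t - 1)%nat) y) (x t).
Proof.
  (* The binder [S] shadows the successor, hence [Datatypes.S] below. *)
  intros Hsp HT HS _ _ Hmono Hx0 Hodd Heven.
  pose proof (proj1 (proj2 Hsp)) as Hpre.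
  destruct (finite_dependent_choice
              (fun t p => le p x0 /\ Coin (H t) (K t) p)
              (fun t p q => minimal_in le
                 (fun y => Coin (H (Datatypes.S t)) (K (Datatypes.S t)) y /\ OX le p y) q)
              n x0) as (x & Hxstart & Hx).
  - split; [apply (proj1 Hpre) | rewrite HT, HS; exact Hx0].
  - intros t p Ht [Hp Hcoin].
    assert (Hq : exists q, minimal_in le
              (fun y => Coin (H (Datatypes.S t)) (K (Datatypes.S t)) y /\ OX le p y) q).
    { specialize (Hmono t Ht). rewrite Nat.add_1_r in Hmono.
      destruct (Nat.even t) eqn:Et; destruct Hmono as [HH HK].
      - destruct (Hodd (Datatypes.S t) ltac:(lia)) as (HA & Hcov & Hbounded);
          [rewrite Nat.odd_succ; exact Et |].
        apply (exists_minimal_coin d s le Hsp x0); try assumption.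
        exact (le_at_coin le Hpre _ _ _ _ p HK HH (eq_sym Hcoin)).
      - destruct (Heven (Datatypes.S t) ltac:(lia)) as (HA & Hcov & Hbounded);
          [rewrite Nat.even_succ, <- Nat.negb_even, Et; reflexivity |].
        destruct (exists_minimal_coin d s le Hsp x0 p (H (Datatypes.S t)) (K (Datatypes.S t)))
          as [q Hq]; try assumption.
        + exact (le_at_coin le Hpre _ _ _ _ p HH HK Hcoin).
        + exists q. revert Hq. apply minimal_in_ext. intro y. rewrite Coin_sym. tauto. }
    destruct Hq as [q Hq]. exists q. split; [exact Hq |].
    destruct Hq as [[Hqcoin Hqp] _].
    split; [exact (proj2 Hpre _ _ _ Hqp Hp) | exact Hqcoin].
  - exists x. split; [exact Hxstart |]. intros [|t] Ht; [lia |].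
    replace (Datatypes.S t - 1)%nat with t by lia.
    destruct (Hx t ltac:(lia)) as [[Hcoin Hle] Hmin].
    repeat split; assumption.
Qed.
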